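(* Let $t>0$, $x\in\mathbb{R}$, let $v_0$ be continuous and bounded on $\mathbb{R}$, and let $c$ be continuous on $[0,\infty)\times\mathbb{R}$ with lower bound $m$, having an $x$-derivative $c_x$ on $]0,\infty)\times\mathbb{R}$ that extends continuously and boundedly to $[0,\infty)\times\mathbb{R}$. For integers $n\ge1$, $t_i=i/n$ and $w\in C_W$ define $$F_n(w)=\exp\Big(\frac n2\sum_{i=1}^n\big[(1-\mathrm{ch}(2t/n))w(t_i)^2+(1-\mathrm{ch}(2t/n)^{-1})w(t_{i-1})^2\big]\Big),$$ $$G_n(w)=\exp\Big(-\frac12\frac{\mathrm{sh}(2t/n)}{\mathrm{ch}(2t/n)}\sum_{j=0}^{n-1}\Big((n\,\mathrm{sh}(2t/n))^{1/2}w(t_j)+\frac{x}{\mathrm{ch}(2t/n)^j}\Big)^2\Big),$$ $$H_n(w)=\exp\Big(-\frac tn\sum_{j=0}^{n-1}c\Big(\frac{(n-j)t}{n},(n\,\mathrm{sh}(2t/n))^{1/2}w(j/n)+\frac{x}{\mathrm{ch}(2t/n)^j}\Big)\Big).$$ Then for all $w\in C_W$: (i) $0\le F_n(w)\le1$ and $\lim_{n\to\infty}F_n(w)=1$; (ii) $0\le G_n(w)\le1$ and $\lim_{n\to\infty}G_n(w)=\exp\big(-t\int_0^1(x+\sqrt{2t}\,w(s))^2ds\big)$; (iii) $0\le H_n(w)\le e^{-mt}$ and $\lim_{n\to\infty}H_n(w)=\exp\big(-t\int_0^1c(t(1-s),\sqrt{2t}\,w(s)+x)\,ds\big)$; (iv)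 $\big|v_0\big((n\,\mathrm{sh}(2t/n))^{1/2}w(1)+\frac{x}{\mathrm{ch}(2t/n)^n}\big)\big|\le\|v_0\|_\infty$ and $\lim_{n\to\infty}v_0\big((n\,\mathrm{sh}(2t/n))^{1/2}w(1)+\frac{x}{\mathrm{ch}(2t/n)^n}\big)=v_0(\sqrt{2t}\,w(1)+x)$.
   Context: $C_W$ is the set of real continuous functions $w$ on $[0,1]$ with $w(0)=0$. $\mathrm{ch},\mathrm{sh}$ are hyperbolic cosine and sine. *)

From Stdlib Require Import Reals.
From Coquelicot Require Import Coquelicot.
Open Scope R_scope.

(* C_W : real continuous functions on [0,1] with w(0)=0.
   Functions are represented as R -> R; only the values on [0,1] matter. *)
Definition in_CW (w : R -> R) : Prop :=
  (forall s, 0 <= s <= 1 ->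
     filterlim w (within (fun u => 0 <= u <= 1) (locally s)) (locally (w s)))
  /\ w 0 = 0.

Definition sup_norm (v : R -> R) : R :=
  real (Lub_Rbar (fun r => exists y, r = Rabs (v y))).

Definition cont_halfplane (f : R -> R -> R) : Prop :=
  forall s y, 0 <= s ->
    filterlim (fun p : R * R => f (fst p) (snd p))
      (within (fun p : R * R => 0 <= fst p) (locally (s, y)))
      (locally (f s y)).

Definition ch := cosh.
Definition sh := sinh.

Definition F_n (t : R) (n : nat) (w : R -> R) : R :=
  exp (INR n / 2 *
    sum_n_m (fun i =>
      (1 - ch (2 * t / INR n)) * (w (INR i / INR n)) ^ 2
      + (1 - / ch (2 * t / INR n)) * (w (INR (i - 1) / INR n)) ^ 2) 1 n).

Definition G_n (t x : R) (n : nat) (w : R -> R) : R :=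
  exp (- (1 / 2) * (sh (2 * t / INR n) / ch (2 * t / INR n)) *
    sum_n_m (fun j =>
      (sqrt (INR n * sh (2 * t / INR n)) * w (INR j / INR n)
       + x / (ch (2 * t / INR n)) ^ j) ^ 2) 0 (n - 1)).

Definition H_n (c : R -> R -> R) (t x : R) (n : nat) (w : R -> R) : R :=
  exp (- (t / INR n) *
    sum_n_m (fun j =>
      c (INR (n - j) * t / INR n)
        (sqrt (INR n * sh (2 * t / INR n)) * w (INR j / INR n)
         + x / (ch (2 * t / INR n)) ^ j)) 0 (n - 1)).

Definition V_n (v0 : R -> R) (t x : R) (n : nat) (w : R -> R) : R :=
  v0 (sqrt (INR n * sh (2 * t / INR n)) * w 1 + x / (ch (2 * t / INR n)) ^ n).

From Stdlib Require Import Reals Lra Lia.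
From Coquelicot Require Import Coquelicot.
Open Scope R_scope.

(* With h = 2t/n one has n sh h -> 2t and n (ch h - 1) -> 0, hence ch h ^ n -> 1.  In F_n
   each summand is a telescoping increment (ch h - 1) (w(t_(i-1))^2 - w(t_i)^2) minus a
   remainder of order (ch h - 1)^2, so the exponent is O(n (ch h - 1) + (n (ch h - 1))^2).
   In G_n and H_n the discrete path (n sh h)^(1/2) w(t_j) + x / ch h ^ j stays uniformly
   within o(1) of sqrt(2t) w(t_j) + x, and c is uniformly Lipschitz in space, so both
   exponents are, up to o(1), left Riemann sums of continuous functions; w is extended
   continuously to R by clamping its argument to [0, 1] so that these sums converge. *)

Definition clamp01 (s : R) : R := Rmax 0 (Rmin 1 s).

Lemma clamp01_range s : 0 <= clamp01 s <= 1.
Proof. unfold clamp01, Rmax, Rmin; repeat destruct Rle_dec; lra. Qed.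

Lemma clamp01_id s : 0 <= s <= 1 -> clamp01 s = s.
Proof. intros; unfold clamp01, Rmax, Rmin; repeat destruct Rle_dec; lra. Qed.

Lemma clamp01_lipschitz u s : Rabs (clamp01 u - clamp01 s) <= Rabs (u - s).
Proof.
  unfold clamp01, Rmax, Rmin; repeat destruct Rle_dec;
  unfold Rabs; repeat destruct Rcase_abs; lra.
Qed.

Lemma continuous_clamp01 z : continuous clamp01 z.
Proof.
  apply filterlim_locally. intros eps. exists eps. intros y Hy.
  change (Rabs (clamp01 y - clamp01 z) < eps). change (Rabs (y - z) < eps) in Hy.
  pose proof (clamp01_lipschitz y z). lra.
Qed.

Lemma in_CW_extension w : in_CW w ->
  exists w', (forall z, continuous w' z) /\ (forall s, 0 <= s <= 1 -> w' s = w s).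
Proof.
  intros [Hw _]. exists (fun s => w (clamp01 s)). split.
  - intros z. eapply filterlim_comp; [| apply (Hw _ (clamp01_range z))].
    intros P [eps Heps]. exists eps. intros y Hy. apply Heps; [| apply clamp01_range].
    change (Rabs (clamp01 y - clamp01 z) < eps). change (Rabs (y - z) < eps) in Hy.
    pose proof (clamp01_lipschitz y z). lra.
  - intros s Hs. now rewrite clamp01_id.
Qed.

Lemma continuous_bounded_01 (f : R -> R) : (forall z, continuous f z) ->
  exists W, forall s, 0 <= s <= 1 -> Rabs (f s) <= W.
Proof.
  intros Hf.
  destruct (continuity_ab_maj (fun s => Rabs (f s)) 0 1) as [s0 [Hs0 _]]; [lra | |].
  - intros z _. apply continuity_pt_filterlim, (continuous_comp f Rabs);
      [apply Hf | apply continuous_Rabs].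
  - exists (Rabs (f s0)). exact Hs0.
Qed.

Lemma in_CW_bounded w : in_CW w -> exists W, forall s, 0 <= s <= 1 -> Rabs (w s) <= W.
Proof.
  intros Hw. destruct (in_CW_extension w Hw) as (w' & Hc & Hag).
  destruct (continuous_bounded_01 w' Hc) as [W HW]. exists W.
  intros s Hs. rewrite <- Hag by exact Hs. auto.
Qed.

Lemma INR_div_range i n : (i <= n)%nat -> 0 <= INR i / INR n <= 1.
Proof.
  intros H. destruct n.
  - replace i with 0%nat by lia. simpl. unfold Rdiv. rewrite Rinv_0, Rmult_0_l. lra.
  - assert (0 < INR (S n)) by (apply lt_0_INR; lia).
    assert (INR i <= INR (S n)) by (apply le_INR; lia).
    split; [apply Rdiv_le_0_compat; auto; apply pos_INR |].
    apply Rmult_le_reg_r with (INR (S n)); auto.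
    unfold Rdiv. rewrite Rmult_assoc, Rinv_l; lra.
Qed.

Lemma exp_le_compat a b : a <= b -> exp a <= exp b.
Proof. intros [H | ->]; [left; apply exp_increasing; auto | lra]. Qed.

Lemma exp_pow a n : exp a ^ n = exp (INR n * a).
Proof.
  induction n as [| n IH]; [simpl; now rewrite Rmult_0_l, exp_0 |].
  rewrite S_INR. simpl. rewrite IH, <- exp_plus. f_equal. ring.
Qed.

Lemma cosh_ge_1 y : 1 <= cosh y.
Proof. unfold cosh. pose proof (exp_ineq1_le y). pose proof (exp_ineq1_le (- y)). lra. Qed.

Lemma sinh_nonneg y : 0 <= y -> 0 <= sinh y.
Proof. intros. unfold sinh. pose proof (exp_le_compat (- y) y ltac:(lra)). lra. Qed.

Lemma Rabs_div_sub_le x p q : 1 <= p <= q -> Rabs (x / p - x) <= Rabs x * (q - 1).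
Proof.
  intros Hp. replace (x / p - x) with (x * (1 / p - 1)) by (field; lra).
  rewrite Rabs_mult. apply Rmult_le_compat_l; [apply Rabs_pos |].
  assert (Hinv : p * (1 / p) = 1) by (field; lra).
  assert (0 < 1 / p) by (apply Rdiv_lt_0_compat; lra).
  rewrite Rabs_left1; nra.
Qed.

Lemma Rabs_sqr_sub_le a b d b0 : Rabs (a - b) <= d -> Rabs b <= b0 ->
  Rabs (a ^ 2 - b ^ 2) <= d * (d + 2 * b0).
Proof.
  intros Hd Hb. replace (a ^ 2 - b ^ 2) with ((a - b) * ((a - b) + 2 * b)) by ring.
  rewrite Rabs_mult. apply Rmult_le_compat; try apply Rabs_pos; auto.
  eapply Rle_trans; [apply Rabs_triang |].
  rewrite Rabs_mult, (Rabs_right 2) by lra. lra.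
Qed.

Lemma Rabs_sub_le_derive_bound (f f' : R -> R) K y1 y2 :
  (forall y, is_derive f y (f' y)) -> (forall y, Rabs (f' y) <= K) ->
  Rabs (f y1 - f y2) <= K * Rabs (y1 - y2).
Proof.
  intros Hd HK. destruct (MVT_abs f f' y2 y1) as [z [Hz _]].
  - intros; apply is_derive_Reals, Hd.
  - rewrite Hz. apply Rmult_le_compat_r; [apply Rabs_pos | apply HK].
Qed.

Lemma continuous_halfplane_comp (c : R -> R -> R) (f g : R -> R) z :
  cont_halfplane c -> (forall s, 0 <= f s) -> continuous f z -> continuous g z ->
  continuous (fun s => c (f s) (g s)) z.
Proof.
  intros Hc Hf0 Hf Hg.
  apply (filterlim_comp _ _ _ (fun s => (f s, g s)) (fun p : R * R => c (fst p) (snd p))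
           _ (within (fun p : R * R => 0 <= fst p) (locally (f z, g z))));
    [| exact (Hc (f z) (g z) (Hf0 z))].
  intros P [eps HP]. change (locally z (fun s => P (f s, g s))).
  generalize (filter_and _ _ (proj1 (filterlim_locally _ _) Hf eps)
                             (proj1 (filterlim_locally _ _) Hg eps)).
  apply filter_imp. intros s [Bf Bg]. apply HP; [split; auto | apply Hf0].
Qed.

Lemma sum_n_m_le_loc (a b : nat -> R) n m :
  (forall k, (n <= k <= m)%nat -> a k <= b k) -> sum_n_m a n m <= sum_n_m b n m.
Proof.
  intros H. destruct (Compare_dec.le_lt_dec n m) as [Hnm | Hmn].
  - induction Hnm as [| m Hnm IH]; [rewrite !sum_n_n; apply H; lia |].
    rewrite !sum_n_Sm by lia. change (plus ?u ?v) with (u + v).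
    apply Rplus_le_compat; [apply IH; intros; apply H | apply H]; lia.
  - rewrite !sum_n_m_zero by lia. apply Rle_refl.
Qed.

Lemma sum_n_m_minus (a b : nat -> R) n m :
  sum_n_m (fun k => a k - b k) n m = sum_n_m a n m - sum_n_m b n m.
Proof.
  destruct (Compare_dec.le_lt_dec n m) as [Hnm | Hmn].
  - induction Hnm as [| m Hnm IH]; [now rewrite !sum_n_n |].
    rewrite !sum_n_Sm by lia. change (plus ?u ?v) with (u + v). rewrite IH. lra.
  - rewrite !sum_n_m_zero by lia. change (@zero R_AbelianMonoid) with 0. lra.
Qed.

Lemma sum_n_m_telescoping_mix (u : nat -> R) p q n :
  sum_n_m (fun i => p * (u (i - 1)%nat - u i) + q * u (i - 1)%nat) 1 n
  = p * (u 0%nat - u n) + q * sum_n_m (fun i => u (i - 1)%nat) 1 n.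
Proof.
  induction n as [| n IH].
  - rewrite !sum_n_m_zero by lia. change (@zero R_AbelianMonoid) with 0. lra.
  - rewrite !sum_n_Sm by lia. change (plus ?a ?b) with (a + b). rewrite IH.
    replace (S n - 1)%nat with n by lia. lra.
Qed.

Lemma is_lim_seq_inv_INR : is_lim_seq (fun n => / INR n) 0.
Proof.
  replace (Finite 0) with (Rbar_inv p_infty) by reflexivity.
  apply is_lim_seq_inv; [apply is_lim_seq_INR | discriminate].
Qed.

Lemma is_lim_seq_div_INR c : is_lim_seq (fun n => c / INR n) 0.
Proof.
  replace 0 with (c * 0) by ring.
  apply is_lim_seq_mult'; [apply is_lim_seq_const | apply is_lim_seq_inv_INR].
Qed.

Lemma is_lim_seq_scaled_increment f l c : derivable_pt_lim f 0 l ->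
  is_lim_seq (fun n => INR n * (f (c / INR n) - f 0)) (c * l).
Proof.
  intros Hd. destruct (Req_dec c 0) as [-> | Hc].
  { rewrite Rmult_0_l. apply (is_lim_seq_ext (fun _ => 0)); [| apply is_lim_seq_const].
    intros n. unfold Rdiv. rewrite Rmult_0_l. ring. }
  apply is_lim_seq_spec. intros eps.
  assert (Hc' : 0 < Rabs c) by now apply Rabs_pos_lt.
  assert (He : 0 < eps / Rabs c) by (apply Rdiv_lt_0_compat; [apply cond_pos | exact Hc']).
  destruct (Hd _ He) as [delta Hdel].
  destruct (proj2 (is_lim_seq_spec _ _) (is_lim_seq_div_INR c) delta) as [N HN].
  exists (S N). intros n Hn. specialize (HN n ltac:(lia)). rewrite Rminus_0_r in HN.
  assert (Hn0 : 0 < INR n) by (apply lt_0_INR; lia).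
  assert (Hh : c / INR n <> 0) by (unfold Rdiv; apply Rmult_integral_contrapositive;
                                   split; [exact Hc | apply Rinv_neq_0_compat; lra]).
  specialize (Hdel _ Hh HN). rewrite Rplus_0_l in Hdel.
  replace (INR n * (f (c / INR n) - f 0) - c * l)
    with (c * ((f (c / INR n) - f 0) / (c / INR n) - l)) by (field; lra).
  replace (pos eps) with (Rabs c * (eps / Rabs c)) by (field; lra).
  rewrite Rabs_mult. apply Rmult_lt_compat_l; assumption.
Qed.

Lemma is_lim_seq_n_sinh a : is_lim_seq (fun n => INR n * sh (a / INR n)) a.
Proof.
  pose proof (is_lim_seq_scaled_increment sinh (cosh 0) a (derivable_pt_lim_sinh 0)) as H.
  rewrite cosh_0, Rmult_1_r in H. eapply is_lim_seq_ext; [| exact H].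
  intros n. unfold sh. rewrite sinh_0, Rminus_0_r. reflexivity.
Qed.

Lemma is_lim_seq_n_cosh_sub_1 a : is_lim_seq (fun n => INR n * (ch (a / INR n) - 1)) 0.
Proof.
  pose proof (is_lim_seq_scaled_increment cosh (sinh 0) a (derivable_pt_lim_cosh 0)) as H.
  rewrite sinh_0, Rmult_0_r, cosh_0 in H. exact H.
Qed.

Lemma is_lim_seq_cosh_div a : is_lim_seq (fun n => ch (a / INR n)) 1.
Proof.
  rewrite <- cosh_0. apply (is_lim_seq_continuous cosh).
  - apply derivable_continuous_pt, derivable_pt_cosh.
  - apply is_lim_seq_div_INR.
Qed.

(* [1 <= ch h ^ n <= exp (n (ch h - 1))], and [n (ch h - 1) -> 0] since [ch h - 1 = O(h^2)]. *)
Lemma is_lim_seq_cosh_div_pow a : is_lim_seq (fun n => ch (a / INR n) ^ n) 1.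
Proof.
  apply is_lim_seq_le_le with (fun _ => 1) (fun n => exp (INR n * (ch (a / INR n) - 1))).
  - intros n. pose proof (cosh_ge_1 (a / INR n)). unfold ch. split.
    + apply pow_R1_Rle; auto.
    + rewrite <- exp_pow. apply pow_incr. pose proof (exp_ineq1_le (cosh (a / INR n) - 1)). lra.
  - apply is_lim_seq_const.
  - replace (Finite 1) with (Finite (exp 0)) by now rewrite exp_0.
    apply is_lim_seq_continuous.
    + apply derivable_continuous_pt, derivable_pt_exp.
    + apply is_lim_seq_n_cosh_sub_1.
Qed.

Lemma is_lim_seq_sqrt_n_sinh a : 0 <= a ->
  is_lim_seq (fun n => sqrt (INR n * sh (a / INR n))) (sqrt a).
Proof.
  intros Ha. apply is_lim_seq_continuous; [apply continuity_pt_sqrt, Ha | apply is_lim_seq_n_sinh].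
Qed.

Lemma is_lim_seq_n_tanh a : is_lim_seq (fun n => INR n * sh (a / INR n) / ch (a / INR n)) a.
Proof.
  replace (Finite a) with (Finite (a / 1)) by (f_equal; field).
  apply is_lim_seq_div'; [apply is_lim_seq_n_sinh | apply is_lim_seq_cosh_div | lra].
Qed.

Definition grid_mean (n : nat) (u : nat -> R) : R := / INR n * sum_n_m u 0 (n - 1).

Lemma Rabs_grid_mean_sub_le (u v : nat -> R) n e : (1 <= n)%nat ->
  (forall j, (j <= n - 1)%nat -> Rabs (u j - v j) <= e) ->
  Rabs (grid_mean n u - grid_mean n v) <= e.
Proof.
  intros Hn H. assert (Hn0 : 0 < INR n) by (apply lt_0_INR; lia).
  unfold grid_mean. rewrite <- Rmult_minus_distr_l, <- sum_n_m_minus, Rabs_mult.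
  rewrite Rabs_right by (left; apply Rinv_0_lt_compat; auto).
  apply Rmult_le_reg_l with (INR n); auto.
  rewrite <- Rmult_assoc, Rinv_r, Rmult_1_l by lra.
  eapply Rle_trans; [apply (norm_sum_n_m (fun j => u j - v j)) |].
  eapply Rle_trans; [apply (sum_n_m_le_loc _ (fun _ => e)); intros j Hj; apply H; lia |].
  rewrite sum_n_m_const. replace (S (n - 1) - 0)%nat with n by lia. lra.
Qed.

Lemma is_lim_seq_grid_mean_perturb (u v : nat -> nat -> R) (e : nat -> R) (L : R) :
  (forall n, (1 <= n)%nat -> forall j, (j <= n - 1)%nat -> Rabs (u n j - v n j) <= e n) ->
  is_lim_seq e 0 -> is_lim_seq (fun n => grid_mean n (v n)) L ->
  is_lim_seq (fun n => grid_mean n (u n)) L.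
Proof.
  intros Huv He Hv.
  apply is_lim_seq_ext
    with (fun n => grid_mean n (v n) + (grid_mean n (u n) - grid_mean n (v n)));
    [intros; ring |].
  replace L with (L + 0) by ring. apply is_lim_seq_plus'; [exact Hv |].
  apply is_lim_seq_le_le_loc with (fun n => - e n) e; [| | exact He].
  - exists 1%nat. intros n Hn. apply Rabs_le_between, Rabs_grid_mean_sub_le; auto.
  - replace 0 with (- 0) by ring. apply (is_lim_seq_opp e 0), He.
Qed.

Section RiemannSums.

Variables (g : R -> R) (e delta : R).
Hypothesis g_continuous : forall z, continuous g z.
Hypothesis g_modulus : forall y z, 0 <= y <= 1 -> 0 <= z <= 1 ->
  Rabs (z - y) < delta -> Rabs (g z - g y) < e.

Lemma RInt_cell_error a b : 0 <= a <= b -> b <= 1 -> b - a < delta ->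
  Rabs (RInt g a b - (b - a) * g a) <= (b - a) * e.
Proof.
  intros Hab Hb Hd.
  assert (Hex : ex_RInt g a b)
    by (apply (@ex_RInt_continuous R_CompleteNormedModule); intros; apply g_continuous).
  replace (RInt g a b - (b - a) * g a) with (RInt (fun s => g s - g a) a b).
  - apply abs_RInt_le_const; [lra | apply (ex_RInt_minus g (fun _ => g a)), ex_RInt_const; exact Hex |].
    intros s Hs. left. apply g_modulus; try lra. rewrite Rabs_right; lra.
  - rewrite (RInt_minus g (fun _ => g a)), RInt_const; [reflexivity | exact Hex | apply ex_RInt_const].
Qed.

Lemma left_riemann_partial_error n k : / INR n < delta -> (k < n)%nat ->
  Rabs (RInt g 0 (INR (S k) / INR n) - / INR n * sum_n_m (fun j => g (INR j / INR n)) 0 k)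
  <= INR (S k) / INR n * e.
Proof.
  intros Hn Hk. assert (Hn0 : 0 < INR n) by (apply lt_0_INR; lia).
  assert (Hcell : forall i, (i < n)%nat ->
    Rabs (RInt g (INR i / INR n) (INR (S i) / INR n) - / INR n * g (INR i / INR n)) <= / INR n * e).
  { intros i Hi. pose proof (INR_div_range i n ltac:(lia)).
    pose proof (INR_div_range (S i) n ltac:(lia)).
    assert (Ed : INR (S i) / INR n - INR i / INR n = / INR n) by (rewrite S_INR; field; lra).
    assert (0 < / INR n) by (apply Rinv_0_lt_compat; lra).
    rewrite <- Ed. apply RInt_cell_error; lra. }
  induction k as [| k IH].
  - rewrite sum_n_n. specialize (Hcell 0%nat Hk).
    replace (INR 0 / INR n) with 0 in * by (simpl; field; lra).
    replace (INR 1 / INR n * e) with (/ INR n * e) by (simpl; field; lra). exact Hcell.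
  - rewrite sum_n_Sm by lia. change (plus ?a ?b) with (a + b).
    rewrite <- (RInt_Chasles g 0 (INR (S k) / INR n))
      by (apply (@ex_RInt_continuous R_CompleteNormedModule); intros; apply g_continuous).
    change (plus ?a ?b) with (a + b).
    specialize (IH ltac:(lia)). specialize (Hcell (S k) Hk).
    replace (INR (S (S k)) / INR n * e) with (INR (S k) / INR n * e + / INR n * e)
      by (rewrite (S_INR (S k)); field; lra).
    eapply Rle_trans; [| apply Rplus_le_compat; [exact IH | exact Hcell]].
    eapply Rle_trans; [| apply Rabs_triang]. right. f_equal. ring.
Qed.

End RiemannSums.

Lemma is_lim_seq_riemann_grid_mean (g : R -> R) : (forall z, continuous g z) ->
  is_lim_seq (fun n => grid_mean n (fun j => g (INR j / INR n))) (RInt g 0 1).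
Proof.
  intros Hg. apply is_lim_seq_spec. intros eps.
  assert (He2 : 0 < eps / 2) by (generalize (cond_pos eps); lra).
  destruct (unifcont_normed_1d g 0 1 (fun y _ => Hg y) (mkposreal _ He2)) as [delta Hdel].
  destruct (proj2 (is_lim_seq_spec _ _) is_lim_seq_inv_INR delta) as [N HN].
  exists (S N). intros n Hn. specialize (HN n ltac:(lia)).
  assert (Hn0 : 0 < INR n) by (apply lt_0_INR; lia).
  rewrite Rminus_0_r, Rabs_right in HN by (left; apply Rinv_0_lt_compat; auto).
  pose proof (left_riemann_partial_error g (eps / 2) delta Hg
                (fun y z Hy Hz Hyz => Hdel y z Hy Hz Hyz) n (n - 1) HN ltac:(lia)) as H.
  replace (S (n - 1)) with n in H by lia.
  replace (INR n / INR n) with 1 in H by (field; lra).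
  unfold grid_mean. rewrite Rabs_minus_sym. generalize (cond_pos eps). lra.
Qed.

Lemma continuous_affine_comp (f : R -> R) a k z :
  continuous f z -> continuous (fun s => a + k * f s) z.
Proof.
  intros Hf. apply (continuous_plus (fun _ => a) (fun s => k * f s)); [apply continuous_const |].
  apply (continuous_mult (fun _ => k) f); [apply continuous_const | exact Hf].
Qed.

Lemma grid_mean_lower_bound (u : nat -> R) n lo : (1 <= n)%nat ->
  (forall j, (j <= n - 1)%nat -> lo <= u j) -> lo <= grid_mean n u.
Proof.
  intros Hn H. assert (Hn0 : 0 < INR n) by (apply lt_0_INR; lia).
  unfold grid_mean. apply Rmult_le_reg_l with (INR n); [exact Hn0 |].
  rewrite <- Rmult_assoc, Rinv_r, Rmult_1_l by lra.
  replace (INR n * lo) with (sum_n_m (fun _ => lo) 0 (n - 1))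
    by (rewrite sum_n_m_const; do 2 f_equal; lia).
  apply sum_n_m_le_loc. intros j Hj. apply H. lia.
Qed.

Lemma exp_form_bounds_limit (u : nat -> R) (hi L B l : R) :
  (forall n, 0 < u n) -> exp hi <= B -> exp L = l ->
  (forall n, (1 <= n)%nat -> ln (u n) <= hi) -> is_lim_seq (fun n => ln (u n)) L ->
  (forall n, (1 <= n)%nat -> 0 <= u n <= B) /\ is_lim_seq u l.
Proof.
  intros Hpos HB <- Hhi HL. split.
  - intros n Hn. rewrite <- (exp_ln (u n)) by apply Hpos. split; [left; apply exp_pos |].
    eapply Rle_trans; [apply exp_le_compat, Hhi, Hn | exact HB].
  - apply is_lim_seq_ext with (fun n => exp (ln (u n))); [intros; apply exp_ln, Hpos |].
    apply is_lim_seq_continuous; [apply derivable_continuous_pt, derivable_pt_exp | exact HL].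
Qed.

Lemma F_exponent_sum_bounds (u : nat -> R) C B n :
  1 <= C -> u 0%nat = 0 -> (forall i, (i <= n)%nat -> 0 <= u i <= B) ->
  - ((C - 1) * B + INR n * (C - 1) ^ 2 * B)
  <= sum_n_m (fun i => (1 - C) * u i + (1 - / C) * u (i - 1)%nat) 1 n <= 0.
Proof.
  intros HC Hu0 Hu. set (a := C - 1).
  (* Each term is a telescoping increment minus [a^2 / C] times a nonnegative weight. *)
  rewrite (sum_n_m_ext _ (fun i => a * (u (i - 1)%nat - u i) + - (a ^ 2 / C) * u (i - 1)%nat)).
  2: { intros i. match goal with |- ?l = ?r => change (@eq R l r) end. unfold a. field. lra. }
  rewrite sum_n_m_telescoping_mix, Hu0.
  set (Su := sum_n_m (fun i => u (i - 1)%nat) 1 n).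
  assert (HSu : 0 <= Su <= INR n * B).
  { replace (INR n * B) with (sum_n_m (fun _ => B) 1 n)
      by (rewrite sum_n_m_const; do 2 f_equal; lia).
    replace 0 with (sum_n_m (fun _ => 0) 1 n) by (rewrite sum_n_m_const; apply Rmult_0_r).
    split; apply sum_n_m_le_loc; intros i Hi; apply Hu; lia. }
  assert (Hun : 0 <= u n <= B) by (apply Hu; lia).
  assert (Ha : 0 <= a) by (unfold a; lra).
  assert (HaC : 0 <= a ^ 2 / C <= a ^ 2).
  { split; [apply Rdiv_le_0_compat; nra |].
    apply Rmult_le_reg_r with C; [lra |].
    unfold Rdiv. rewrite Rmult_assoc, Rinv_l by lra. nra. }
  assert (a * u n <= a * B) by (apply Rmult_le_compat_l; lra).
  assert (a ^ 2 / C * Su <= a ^ 2 * (INR n * B)) by (apply Rmult_le_compat; lra).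
  assert (0 <= a ^ 2 / C * Su) by (apply Rmult_le_pos; lra).
  split; nra.
Qed.

Lemma ln_F_n_bounds t w W n : w 0 = 0 -> (forall s, 0 <= s <= 1 -> Rabs (w s) <= W) ->
  - (W ^ 2 / 2) * (INR n * (ch (2 * t / INR n) - 1)) * (1 + INR n * (ch (2 * t / INR n) - 1))
  <= ln (F_n t n w) <= 0.
Proof.
  intros Hw0 Hw. unfold F_n. rewrite ln_exp.
  destruct (F_exponent_sum_bounds (fun i => w (INR i / INR n) ^ 2) (ch (2 * t / INR n)) (W ^ 2) n)
    as [Hlo Hhi].
  - apply cosh_ge_1.
  - simpl. unfold Rdiv. rewrite Rmult_0_l, Hw0. ring.
  - intros i Hi. split; [apply pow2_ge_0 |].
    rewrite <- pow2_abs. apply pow_incr. split; [apply Rabs_pos | apply Hw, INR_div_range, Hi].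
  - cbv beta in Hlo, Hhi. pose proof (pos_INR n). split; nra.
Qed.

Lemma F_n_bounds_limit t w : in_CW w ->
  (forall n, (1 <= n)%nat -> 0 <= F_n t n w <= 1) /\ is_lim_seq (fun n => F_n t n w) 1.
Proof.
  intros Hw. destruct (in_CW_bounded w Hw) as [W HW].
  pose proof (fun n => ln_F_n_bounds t w W n (proj2 Hw) HW) as Hln.
  apply (exp_form_bounds_limit _ 0 0); [intros; apply exp_pos | rewrite exp_0; lra | apply exp_0 |
                                         intros n _; apply Hln |].
  eapply is_lim_seq_le_le; [apply Hln | | apply is_lim_seq_const].
  replace 0 with (- (W ^ 2 / 2) * 0 * (1 + 0)) by ring.
  pose proof (is_lim_seq_n_cosh_sub_1 (2 * t)) as Hb.
  apply is_lim_seq_mult'; [apply is_lim_seq_mult'; [apply is_lim_seq_const | exact Hb] |].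
  apply is_lim_seq_plus'; [apply is_lim_seq_const | exact Hb].
Qed.

Definition discrete_path (t x : R) (w : R -> R) (n j : nat) : R :=
  sqrt (INR n * sh (2 * t / INR n)) * w (INR j / INR n) + x / ch (2 * t / INR n) ^ j.

Definition discrete_path_error (t x W : R) (n : nat) : R :=
  Rabs (sqrt (INR n * sh (2 * t / INR n)) - sqrt (2 * t)) * W
  + Rabs x * (ch (2 * t / INR n) ^ n - 1).

Lemma discrete_path_close t x w W n j :
  (forall s, 0 <= s <= 1 -> Rabs (w s) <= W) -> (j <= n)%nat ->
  Rabs (discrete_path t x w n j - (sqrt (2 * t) * w (INR j / INR n) + x))
  <= discrete_path_error t x W n.
Proof.
  intros Hw Hj. unfold discrete_path, discrete_path_error.
  match goal with |- Rabs ?d <= _ =>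
    replace d with ((sqrt (INR n * sh (2 * t / INR n)) - sqrt (2 * t)) * w (INR j / INR n)
                    + (x / ch (2 * t / INR n) ^ j - x)) by ring end.
  eapply Rle_trans; [apply Rabs_triang | apply Rplus_le_compat].
  - rewrite Rabs_mult. apply Rmult_le_compat_l; [apply Rabs_pos | apply Hw, INR_div_range, Hj].
  - apply Rabs_div_sub_le. pose proof (cosh_ge_1 (2 * t / INR n)). unfold ch.
    split; [apply pow_R1_Rle | apply Rle_pow]; auto.
Qed.

Lemma is_lim_seq_discrete_path_error t x W : 0 <= t ->
  is_lim_seq (discrete_path_error t x W) 0.
Proof.
  intros Ht. unfold discrete_path_error.
  replace 0 with (Rabs (sqrt (2 * t) - sqrt (2 * t)) * W + Rabs x * (1 - 1))
    by (rewrite Rminus_diag, Rabs_R0; ring).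
  apply is_lim_seq_plus'; apply is_lim_seq_mult'; try apply is_lim_seq_const.
  - apply (is_lim_seq_abs _ (sqrt (2 * t) - sqrt (2 * t))), is_lim_seq_minus';
      [apply is_lim_seq_sqrt_n_sinh; lra | apply is_lim_seq_const].
  - apply is_lim_seq_minus'; [apply is_lim_seq_cosh_div_pow | apply is_lim_seq_const].
Qed.

Lemma is_lim_seq_grid_mean_path_sqr t x w : 0 <= t -> in_CW w ->
  is_lim_seq (fun n => grid_mean n (fun j => discrete_path t x w n j ^ 2))
    (RInt (fun s => (x + sqrt (2 * t) * w s) ^ 2) 0 1).
Proof.
  intros Ht Hw.
  destruct (in_CW_extension w Hw) as (w' & Hw'c & Hw'w).
  destruct (in_CW_bounded w Hw) as [W HW].
  set (g := fun s => (x + sqrt (2 * t) * w' s) ^ 2).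
  replace (RInt (fun s => (x + sqrt (2 * t) * w s) ^ 2) 0 1) with (RInt g 0 1).
  2: { apply RInt_ext. intros s Hs. rewrite Rmin_left, Rmax_right in Hs by lra.
       unfold g. rewrite Hw'w by lra. reflexivity. }
  set (b0 := sqrt (2 * t) * W + Rabs x).
  apply (is_lim_seq_grid_mean_perturb _ (fun n j => g (INR j / INR n))
    (fun n => discrete_path_error t x W n * (discrete_path_error t x W n + 2 * b0))).
  - intros n Hn j Hj. pose proof (INR_div_range j n ltac:(lia)) as Hjn.
    unfold g. rewrite Hw'w by exact Hjn. apply Rabs_sqr_sub_le.
    + rewrite (Rplus_comm x). apply discrete_path_close; [exact HW | lia].
    + eapply Rle_trans; [apply Rabs_triang |].
      rewrite Rabs_mult, (Rabs_right (sqrt (2 * t))) by apply Rle_ge, sqrt_pos.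
      pose proof (HW _ Hjn). pose proof (sqrt_pos (2 * t)). unfold b0. nra.
  - replace 0 with (0 * (0 + 2 * b0)) by ring.
    pose proof (is_lim_seq_discrete_path_error t x W Ht) as He.
    apply is_lim_seq_mult'; [exact He | apply is_lim_seq_plus'; [exact He | apply is_lim_seq_const]].
  - apply is_lim_seq_riemann_grid_mean. intros z.
    apply (continuous_comp (fun s => x + sqrt (2 * t) * w' s) (fun y => y ^ 2));
      [apply continuous_affine_comp, Hw'c |].
    apply continuity_pt_filterlim, derivable_continuous_pt, derivable_pt_pow.
Qed.

Lemma ln_G_n t x n w : (1 <= n)%nat ->
  ln (G_n t x n w) = - (1 / 2) * (INR n * sh (2 * t / INR n) / ch (2 * t / INR n))
                     * grid_mean n (fun j => discrete_path t x w n j ^ 2).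
Proof.
  intros Hn. assert (0 < INR n) by (apply lt_0_INR; lia).
  pose proof (cosh_ge_1 (2 * t / INR n)).
  unfold G_n, grid_mean, discrete_path. rewrite ln_exp.
  match goal with |- context [sum_n_m ?f ?a ?b] => generalize (sum_n_m f a b : R) end.
  intros Su. field. unfold ch. lra.
Qed.

Lemma G_n_bounds_limit t x w : 0 <= t -> in_CW w ->
  (forall n, (1 <= n)%nat -> 0 <= G_n t x n w <= 1) /\
  is_lim_seq (fun n => G_n t x n w)
    (exp (- t * RInt (fun s => (x + sqrt (2 * t) * w s) ^ 2) 0 1)).
Proof.
  intros Ht Hw.
  eapply (exp_form_bounds_limit _ 0);
    [intros; apply exp_pos | rewrite exp_0; lra | reflexivity | |].
  - intros n Hn. rewrite ln_G_n by exact Hn.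
    assert (0 < INR n) by (apply lt_0_INR; lia).
    assert (0 <= INR n * sh (2 * t / INR n) / ch (2 * t / INR n)).
    { pose proof (cosh_ge_1 (2 * t / INR n)).
      apply Rdiv_le_0_compat; [| unfold ch; lra].
      apply Rmult_le_pos; [lra | apply sinh_nonneg, Rdiv_le_0_compat; lra]. }
    assert (0 <= grid_mean n (fun j => discrete_path t x w n j ^ 2))
      by (apply grid_mean_lower_bound; [exact Hn | intros; apply pow2_ge_0]).
    nra.
  - apply is_lim_seq_ext_loc with (fun n => - (1 / 2) *
      (INR n * sh (2 * t / INR n) / ch (2 * t / INR n))
      * grid_mean n (fun j => discrete_path t x w n j ^ 2)).
    { exists 1%nat. intros n Hn. symmetry. apply ln_G_n, Hn. }
    set (Ig := RInt (fun s => (x + sqrt (2 * t) * w s) ^ 2) 0 1).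
    replace (- t * Ig) with (- (1 / 2) * (2 * t) * Ig) by lra.
    apply is_lim_seq_mult';
      [apply is_lim_seq_mult'; [apply is_lim_seq_const | apply is_lim_seq_n_tanh] |].
    apply is_lim_seq_grid_mean_path_sqr; assumption.
Qed.

Lemma is_lim_seq_grid_mean_c_path t x (c cx : R -> R -> R) w : 0 < t -> cont_halfplane c ->
  (forall s y, 0 < s -> is_derive (fun z => c s z) y (cx s y)) ->
  (exists K, forall s y, 0 <= s -> Rabs (cx s y) <= K) -> in_CW w ->
  is_lim_seq (fun n => grid_mean n (fun j => c (INR (n - j) * t / INR n) (discrete_path t x w n j)))
    (RInt (fun s => c (t * (1 - s)) (sqrt (2 * t) * w s + x)) 0 1).
Proof.
  intros Ht Hc Hd [K HK] Hw.
  destruct (in_CW_extension w Hw) as (w' & Hw'c & Hw'w).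
  destruct (in_CW_bounded w Hw) as [W HW].
  (* Clamping keeps the time argument nonnegative off [0, 1]. *)
  set (g := fun s => c (t + - t * clamp01 s) (x + sqrt (2 * t) * w' s)).
  replace (RInt (fun s => c (t * (1 - s)) (sqrt (2 * t) * w s + x)) 0 1) with (RInt g 0 1).
  2: { apply RInt_ext. intros s Hs. rewrite Rmin_left, Rmax_right in Hs by lra.
       unfold g. rewrite clamp01_id, Hw'w by lra. f_equal; ring. }
  apply (is_lim_seq_grid_mean_perturb _ (fun n j => g (INR j / INR n))
    (fun n => K * discrete_path_error t x W n)).
  - intros n Hn j Hj. pose proof (INR_div_range j n ltac:(lia)) as Hjn.
    set (s := INR (n - j) * t / INR n).
    assert (Hs : 0 < s).
    { apply Rdiv_lt_0_compat; [apply Rmult_lt_0_compat; [apply lt_0_INR; lia | lra] |].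
      apply lt_0_INR; lia. }
    assert (Es : s = t + - t * clamp01 (INR j / INR n)).
    { unfold s. rewrite clamp01_id, minus_INR by (auto; lia). field. apply not_0_INR. lia. }
    unfold g. rewrite <- Es, Hw'w by exact Hjn.
    eapply Rle_trans.
    { apply (Rabs_sub_le_derive_bound (fun z => c s z) (cx s)); intros y;
        [apply Hd, Hs | apply HK; lra]. }
    apply Rmult_le_compat_l.
    + pose proof (HK 0 0 (Rle_refl 0)). pose proof (Rabs_pos (cx 0 0)). lra.
    + rewrite (Rplus_comm x). apply discrete_path_close; [exact HW | lia].
  - replace 0 with (K * 0) by ring.
    apply is_lim_seq_mult'; [apply is_lim_seq_const | apply is_lim_seq_discrete_path_error; lra].
  - apply is_lim_seq_riemann_grid_mean. intros z.
    apply continuous_halfplane_comp; [exact Hc | | | apply continuous_affine_comp, Hw'c].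
    + intros u. pose proof (clamp01_range u). nra.
    + apply continuous_affine_comp, continuous_clamp01.
Qed.

Lemma ln_H_n c t x n w : (1 <= n)%nat ->
  ln (H_n c t x n w)
  = - t * grid_mean n (fun j => c (INR (n - j) * t / INR n) (discrete_path t x w n j)).
Proof.
  intros Hn. assert (0 < INR n) by (apply lt_0_INR; lia).
  unfold H_n, grid_mean, discrete_path. rewrite ln_exp.
  match goal with |- context [sum_n_m ?f ?a ?b] => generalize (sum_n_m f a b : R) end.
  intros Su. field. lra.
Qed.

Lemma H_n_bounds_limit t x m (c cx : R -> R -> R) w : 0 < t -> cont_halfplane c ->
  (forall s y, 0 <= s -> m <= c s y) ->
  (forall s y, 0 < s -> is_derive (fun z => c s z) y (cx s y)) ->
  (exists K, forall s y, 0 <= s -> Rabs (cx s y) <= K) -> in_CW w ->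
  (forall n, (1 <= n)%nat -> 0 <= H_n c t x n w <= exp (- m * t)) /\
  is_lim_seq (fun n => H_n c t x n w)
    (exp (- t * RInt (fun s => c (t * (1 - s)) (sqrt (2 * t) * w s + x)) 0 1)).
Proof.
  intros Ht Hc Hm Hd HK Hw.
  eapply (exp_form_bounds_limit _ (- m * t));
    [intros; apply exp_pos | apply Rle_refl | reflexivity | |].
  - intros n Hn. rewrite ln_H_n by exact Hn.
    assert (m <= grid_mean n (fun j => c (INR (n - j) * t / INR n) (discrete_path t x w n j))).
    { apply grid_mean_lower_bound; [exact Hn |]. intros j Hj. apply Hm.
      apply Rdiv_le_0_compat; [apply Rmult_le_pos; [apply pos_INR | lra] | apply lt_0_INR; lia]. }
    nra.
  - apply is_lim_seq_ext_loc with (fun n =>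
      - t * grid_mean n (fun j => c (INR (n - j) * t / INR n) (discrete_path t x w n j))).
    { exists 1%nat. intros n Hn. symmetry. apply ln_H_n, Hn. }
    apply is_lim_seq_mult'; [apply is_lim_seq_const |].
    apply (is_lim_seq_grid_mean_c_path t x c cx); assumption.
Qed.

Lemma Rabs_le_sup_norm (v : R -> R) : (exists M, forall y, Rabs (v y) <= M) ->
  forall y, Rabs (v y) <= sup_norm v.
Proof.
  intros [M HM] y. unfold sup_norm.
  destruct (Lub_Rbar_correct (fun r => exists y, r = Rabs (v y))) as [Hub Hlub].
  assert (H1 : Rbar_le (Rabs (v y)) (Lub_Rbar (fun r => exists y, r = Rabs (v y))))
    by (apply Hub; exists y; reflexivity).
  assert (H2 : Rbar_le (Lub_Rbar (fun r => exists y, r = Rabs (v y))) M)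
    by (apply Hlub; intros r [z ->]; apply HM).
  destruct (Lub_Rbar (fun r => exists y, r = Rabs (v y))); simpl in *; tauto.
Qed.

Lemma V_n_bounds_limit (v0 : R -> R) t x w : 0 <= t ->
  (forall y, continuous v0 y) -> (exists M, forall y, Rabs (v0 y) <= M) ->
  (forall n, (1 <= n)%nat -> Rabs (V_n v0 t x n w) <= sup_norm v0) /\
  is_lim_seq (fun n => V_n v0 t x n w) (v0 (sqrt (2 * t) * w 1 + x)).
Proof.
  intros Ht Hv0 Hb. split; [intros n _; apply Rabs_le_sup_norm, Hb |].
  unfold V_n. apply is_lim_seq_continuous; [apply continuity_pt_filterlim, Hv0 |].
  apply is_lim_seq_plus';
    [apply is_lim_seq_mult'; [apply is_lim_seq_sqrt_n_sinh; lra | apply is_lim_seq_const] |].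
  pose proof (is_lim_seq_div' _ _ x 1 (is_lim_seq_const x) (is_lim_seq_cosh_div_pow (2 * t))
                R1_neq_R0) as Hx.
  now rewrite Rdiv_1_r in Hx.
Qed.

Theorem lemma1 (t x m : R) (v0 : R -> R) (c cx : R -> R -> R) :
  0 < t ->
  (forall y, continuous v0 y) ->
  (exists M, forall y, Rabs (v0 y) <= M) ->
  cont_halfplane c ->
  (forall s y, 0 <= s -> m <= c s y) ->
  (forall s y, 0 < s -> is_derive (fun z => c s z) y (cx s y)) ->
  cont_halfplane cx ->
  (exists K, forall s y, 0 <= s -> Rabs (cx s y) <= K) ->
  forall w : R -> R, in_CW w ->
  ((forall n, (1 <= n)%nat -> 0 <= F_n t n w <= 1)
   /\ is_lim_seq (fun n => F_n t n w) 1) /\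
  ((forall n, (1 <= n)%nat -> 0 <= G_n t x n w <= 1)
   /\ is_lim_seq (fun n => G_n t x n w)
        (exp (- t * RInt (fun s => (x + sqrt (2 * t) * w s) ^ 2) 0 1))) /\
  ((forall n, (1 <= n)%nat -> 0 <= H_n c t x n w <= exp (- m * t))
   /\ is_lim_seq (fun n => H_n c t x n w)
        (exp (- t * RInt (fun s => c (t * (1 - s)) (sqrt (2 * t) * w s + x)) 0 1))) /\
  ((forall n, (1 <= n)%nat -> Rabs (V_n v0 t x n w) <= sup_norm v0)
   /\ is_lim_seq (fun n => V_n v0 t x n w) (v0 (sqrt (2 * t) * w 1 + x))).
Proof.
  intros Ht Hv0 Hv0b Hc Hm Hd _ HK w Hw.
  split; [| split; [| split]].
  - apply F_n_bounds_limit, Hw.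
  - apply G_n_bounds_limit; [lra | exact Hw].
  - exact (H_n_bounds_limit t x m c cx w Ht Hc Hm Hd HK Hw).
  - apply V_n_bounds_limit; [lra | assumption | assumption].
Qed.
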